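(* Assume condition (ii)' with $\zeta$ having a finite exponential moment ($\mathbb E e^{u\zeta}<\infty$ for some $u>0$). Let $a,\varepsilon>0$ with $1/2-\varepsilon>2a$. There exist $t_0>0$ and $c>0$ such that for all $t>t_0$, all $d\le t^a$, all $\gamma\in(0,1/2-2a-\varepsilon)$ and all $x\in W_{t,\varepsilon}$, \[\Delta(x)\ge\Big(1-\frac{c}{t^\gamma}\Big)h(x).\]
   Context: Likelihood ratio order $U\le_{lr}W$: $\mathbf P(U\in A)\mathbf P(W\in B)\ge\mathbf P(U\in B)\mathbf P(W\in A)$ for measurable $A,B$ with $\sup A\le\inf B$. Condition (ii)' for a real random variable $X$: there is $\zeta$ with values in $[1,\infty)$ such that for all $\theta\ge0$, $(X-\theta)\mid\{X>\theta\}\le_{lr}\zeta$ and $-(X+\theta)\mid\{X<-\theta\}\le_{lr}\zeta$. With $\zeta_1,\dots,\zeta_{d-1}$ i.i.d. copies of $\zeta$, $\eta_1=0$, $\eta_j=\sum_{i<j}\zeta_i$, define $h(x)=\mathbb E\big[\prod_{1\le i<j\le d}(x_j-x_i+\eta_j-\eta_i)\big]$ and $\Delta(x)=\prod_{1\le i<j\le d}(x_j-x_i)$. $W_{t,\varepsilon}=\{x\in\mathbb R^d:x_{j+1}-x_j>t^{1/2-\varepsilon},1\le j<d\}$. *)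

From HB Require Import structures.
From mathcomp Require Import all_boot all_order all_algebra.
From mathcomp Require Import all_classical all_reals all_analysis.
Set Implicit Arguments. Unset Strict Implicit. Unset Printing Implicit Defensive.
Import Order.TTheory GRing.Theory Num.Theory.
Local Open Scope classical_set_scope.
Local Open Scope ring_scope.

Section Defs.
Context (R : realType) (dT : measure_display) (T : measurableType dT).

Definition lr_le (mu nu : set R -> \bar R) : Prop :=
  forall A B : set R, measurable A -> measurable B ->
    (forall a b, A a -> B b -> a <= b) ->
    (mu B * nu A <= mu A * nu B)%E.

(* Conditional
   laws are taken unnormalized (lr_le is invariant under positive scaling). *)
Definition condition_ii' (P : probability T R) (X zeta : T -> R) : Prop :=
  forall theta : R, 0 <= theta ->
    lr_le (fun A => P ([set w | theta < X w] `&` [set w | A (X w - theta)]))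
          (fun A => P (zeta @^-1` A)) /\
    lr_le (fun A => P ([set w | X w < - theta] `&` [set w | A (- (X w + theta))]))
          (fun A => P (zeta @^-1` A)).

Definition mutually_independent (P : probability T R) (Z : nat -> T -> R) : Prop :=
  forall (S : seq nat) (B : nat -> set R), uniq S ->
    (forall i, measurable (B i)) ->
    P (\bigcap_(i in [set` S]) (Z i @^-1` B i)) =
    (\prod_(i <- S) P (Z i @^-1` B i))%E.

(* eta_j = sum_{i<j} Z_i (0-based: eta_0 = 0) *)
Definition eta (Z : nat -> T -> R) (j : nat) (w : T) : R := \sum_(k < j) Z k w.

Definition Delta (d : nat) (x : 'I_d -> R) : R :=
  \prod_(i < d) \prod_(j < d | (i < j)%N) (x j - x i).

Definition h (P : probability T R) (Z : nat -> T -> R) (d : nat) (x : 'I_d -> R)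
  : \bar R :=
  (\int[P]_w (\prod_(i < d) \prod_(j < d | (i < j)%N)
                (x j - x i + eta Z j w - eta Z i w))%:E)%E.
End Defs.

Definition Wte (R : realType) (d : nat) (t eps : R) : set ('I_d -> R) :=
  [set x | forall i j : 'I_d, val j = (val i).+1 -> t `^ (1/2 - eps) < x j - x i].

From Pilot Require Import Defs.
From HB Require Import structures.
From mathcomp Require Import all_boot all_order all_algebra.
From mathcomp Require Import all_classical all_reals all_analysis.
From mathcomp Require Import measurable_realfun ring lra.
Set Implicit Arguments. Unset Strict Implicit.
Import Order.TTheory GRing.Theory Num.Theory.
Local Open Scope classical_set_scope.
Local Open Scope ring_scope.

(* The integrand of h(x) is Delta(x + eta) = prod_(i<j) (g_ij + sum_(i<=k<j) Z_k), where the
   gaps g_ij = x_j - x_i are at least (j - i) s with s = t^(1/2-eps).  Each factor is at most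
   g_ij exp(rho_ij), rho_ij being the mean of |Z_k| / s over i <= k < j, so that
   |Delta(x + eta)| <= Delta(x) exp(sum rho_ij).  Jensen's inequality for exp, over the pairs
   and then over the k, bounds exp(sum rho_ij) by an average of the variables exp(lam |Z_k|)
   with lam = d^2 / s <= t^-gamma, and the exponential moment of zeta makes each of their means
   1 + O(lam).  Hence h(x) <= (1 + O(t^-gamma)) Delta(x). *)

Section ExpInequalities.
Variable R : realType.

Lemma sumr_const_seq (I : Type) (r : seq I) (c : R) : \sum_(k <- r) c = c *+ size r.
Proof. by elim: r => [|a r ih]; rewrite ?big_nil ?big_cons ?ih ?mulrS. Qed.

(* Jensen's inequality: sum the tangent-line bounds of expR at the mean of the n * y_k. *)
Lemma expR_sum_le_avg (I : Type) (r : seq I) (y : I -> R) : (0 < size r)%N ->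
  expR (\sum_(k <- r) y k) <= (size r)%:R^-1 * \sum_(k <- r) expR ((size r)%:R * y k).
Proof.
move=> r_gt0; set n := (size r)%:R; set m := \sum_(k <- r) y k.
have n_gt0 : 0 < n by rewrite ltr0n.
have tangent k : expR m * (1 + (n * y k - m)) <= expR (n * y k).
  rewrite -[X in _ <= expR X](subrK m) expRD [leRHS]mulrC.
  by apply: ler_wpM2l; [exact: expR_ge0 | exact: expR_ge1Dx].
have sum_tangent : \sum_(k <- r) expR m * (1 + (n * y k - m)) = n * expR m.
  rewrite -mulr_sumr !big_split /= sumrN !sumr_const_seq -mulr_sumr -/m.
  by rewrite -[m *+ _]mulr_natr /n; ring.
by rewrite ler_pdivlMl // -sum_tangent; apply: ler_sum => k _; exact: tangent.
Qed.

Lemma expR_mul_le_1D (u lam z : R) : 0 < u -> 0 <= lam -> lam <= u / 2 -> 0 <= z ->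
  expR (lam * z) <= 1 + 2 * lam / u * expR (u * z).
Proof.
move=> u_gt0 lam_ge0 lam_le z_ge0.
set A := expR (lam * z); set B := expR (u * z / 2).
have A_gt0 : 0 < A by exact: expR_gt0.
have B_gt0 : 0 < B by exact: expR_gt0.
have A_le : A <= 1 + lam * z * A.
  have := expR_ge1Dx (- (lam * z)); rewrite expRN => h.
  have : (1 - lam * z) * A <= A^-1 * A by rewrite ler_wpM2r // ltW.
  by rewrite mulVf ?gt_eqF // mulrBl mul1r; lra.
have AB : A <= B by rewrite ler_expR; nra.
have zB : z <= 2 / u * B.
  have := expR_ge1Dx (u * z / 2); rewrite -/B => h.
  by rewrite mulrAC ler_pdivlMr //; nra.
have -> : expR (u * z) = B * B by rewrite -expRD; congr expR; field.
have -> : 2 * lam / u * (B * B) = lam * (2 / u * B) * B by field; lra.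
have : lam * z * A <= lam * (2 / u * B) * B.
  by apply: ler_pM; [nra | nra | nra | exact: AB].
lra.
Qed.

(* g + |e| <= g (1 + |e| / g) <= g exp(|e| / m) *)
Lemma normrD_le_mul_expR (g m e : R) : 0 < m -> m <= g ->
  `|g + e| <= g * expR (`|e| / m).
Proof.
move=> m_gt0 mg; have g_gt0 : 0 < g := lt_le_trans m_gt0 mg.
apply: le_trans (ler_normD _ _) _; rewrite gtr0_norm //.
have -> : g + `|e| = g * (1 + `|e| / g) by field; exact: lt0r_neq0.
apply: ler_wpM2l; first exact: ltW.
apply: le_trans (expR_ge1Dx _) _; rewrite ler_expR.
by apply: ler_wpM2l => //; rewrite lef_pV2 ?posrE.
Qed.

End ExpInequalities.

Section ShiftedVandermonde.
Variables (R : realType) (dT : measure_display) (T : measurableType dT).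
Variables (Z : nat -> T -> R) (d : nat) (x : 'I_d -> R).

Definition Delta_shift (w : T) : R := Delta (fun i => x i + Defs.eta Z i w).

Lemma eta_subE (i j : nat) w : (i <= j)%N ->
  Defs.eta Z j w - Defs.eta Z i w = \sum_(i <= k < j) Z k w.
Proof.
move=> ij; rewrite /Defs.eta -!(big_mkord (fun=> true) (fun k => Z k w)).
by rewrite (big_cat_nat (leq0n i) ij) /= addrC addrK.
Qed.

Lemma Delta_shiftE w : Delta_shift w =
  \prod_(i < d) \prod_(j < d | (i < j)%N) (x j - x i + \sum_(i <= k < j) Z k w).
Proof.
apply: eq_bigr => i _; apply: eq_bigr => j /ltnW ij.
by rewrite -eta_subE //; ring.
Qed.

Lemma hE (P : probability T R) : h P Z x = (\int[P]_w (Delta_shift w)%:E)%E.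
Proof.
apply: eq_integral => w _; congr EFin.
by apply: eq_bigr => i _; apply: eq_bigr => j _; ring.
Qed.

End ShiftedVandermonde.

Section SpacedPoints.
Variables (R : realType) (dT : measure_display) (T : measurableType dT).
Variables (Z : nat -> T -> R) (d : nat) (x : 'I_d -> R) (s : R).
Hypothesis s_gt0 : 0 < s.
Hypothesis x_spaced : forall i j : 'I_d, val j = (val i).+1 -> s < x j - x i.

Lemma spaced_subr_ge {i j : 'I_d} : (i <= j)%N -> (j - i)%:R * s <= x j - x i.
Proof.
move=> ij; have [n jE] : exists n, val j = (i + n)%N by exists (j - i)%N; rewrite subnKC.
elim: n j ij jE => [|n IHn] j ij jE.
  have -> : j = i by apply: val_inj; rewrite /= jE addn0.
  by rewrite subnn mul0r subrr.
have j'_lt : (i + n < d)%N by have := ltn_ord j; rewrite jE addnS => /ltnW.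
pose j' := Ordinal j'_lt.
have := IHn j' (leq_addr _ _) erefl; have := @x_spaced j' j; rewrite jE addnS => /(_ erefl).
rewrite /= jE !addKn -addn1 natrD mulrDl mul1r => /ltW step IH.
by rewrite (_ : x j - x i = (x j' - x i) + (x j - x j')) ?lerD //; ring.
Qed.

Lemma spaced_Delta_gt0 : 0 < Delta x.
Proof.
apply: prodr_gt0 => i _; apply: prodr_gt0 => j ij.
by apply: lt_le_trans (spaced_subr_ge (ltnW ij)); rewrite mulr_gt0 // ltr0n subn_gt0.
Qed.

Lemma Delta_shift_ge0 w : (forall k, (k < d)%N -> 0 <= Z k w) -> 0 <= Delta_shift Z x w.
Proof.
move=> Z_ge0; rewrite Delta_shiftE; apply: prodr_ge0 => i _; apply: prodr_ge0 => j ij.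
apply: addr_ge0.
  by apply: le_trans (spaced_subr_ge (ltnW ij)); rewrite mulr_ge0 // ltW.
rewrite big_seq_cond; apply: sumr_ge0 => k /andP[] /[!mem_index_iota] /andP[_ kj] _.
exact/Z_ge0/(ltn_trans kj).
Qed.

Definition rho (i j : 'I_d) w := (\sum_(i <= k < j) `|Z k w|) / ((j - i)%:R * s).

Lemma norm_Delta_shift_le w :
  `|Delta_shift Z x w| <= Delta x * expR (\sum_(i < d) \sum_(j < d | (i < j)%N) rho i j w).
Proof.
rewrite Delta_shiftE /Delta expR_sum -big_split normr_prod /=.
apply: ler_prod => i _; rewrite normr_ge0 expR_sum -big_split normr_prod /=.
apply: ler_prod => j ij; rewrite normr_ge0 /=.
have gap_gt0 : 0 < (j - i)%:R * s by rewrite mulr_gt0 // ltr0n subn_gt0.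
apply: le_trans (normrD_le_mul_expR _ gap_gt0 (spaced_subr_ge (ltnW ij))) _.
apply: ler_wpM2l; first by apply: le_trans (spaced_subr_ge (ltnW ij)); exact: ltW.
by rewrite ler_expR ler_pM2r ?invr_gt0 //; exact: ler_norm_sum.
Qed.

Definition lam : R := (d * d)%:R / s.

(* The pairs with i >= j get 1 = expR 0, so that Jensen can average over all d^2 pairs. *)
Definition Phi (i j : 'I_d) w : R :=
  if (i < j)%N then (j - i)%:R^-1 * \sum_(i <= k < j) expR (lam * `|Z k w|) else 1.

(* Jensen over the d^2 pairs (i, j), then over the j - i summands of rho i j. *)
Lemma expR_sum_rho_le w : (0 < d)%N ->
  expR (\sum_(i < d) \sum_(j < d | (i < j)%N) rho i j w)
  <= (d * d)%:R^-1 * \sum_(i < d) \sum_(j < d) Phi i j w.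
Proof.
move=> d_gt0.
pose rho' (p : 'I_d * 'I_d) := if (p.1 < p.2)%N then rho p.1 p.2 w else 0.
have -> : \sum_(i < d) \sum_(j < d | (i < j)%N) rho i j w = \sum_p rho' p.
  rewrite (eq_bigr (fun i => \sum_(j < d) rho' (i, j))) ?pair_big // => i _.
  by rewrite big_mkcond.
have enum_size : size (enum {: 'I_d * 'I_d}) = (d * d)%N.
  by rewrite -cardE card_prod card_ord.
have := expR_sum_le_avg (r := enum {: 'I_d * 'I_d}) rho'.
rewrite enum_size !big_enum muln_gt0 d_gt0 => /(_ isT) /le_trans; apply.
rewrite ler_wpM2l ?invr_ge0 // pair_big /=; apply: ler_sum => -[i j] _ /=.
rewrite /rho' /Phi /=; case: ifP => ij; last by rewrite mulr0 expR0.
have ji_neq0 : (j - i)%:R != 0 :> R by rewrite pnatr_eq0 -lt0n subn_gt0.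
have -> : (d * d)%:R * rho i j w =
    \sum_(k <- index_iota i j) lam * `|Z k w| / (j - i)%:R.
  by rewrite -mulr_suml -mulr_sumr /rho /lam; field; rewrite ji_neq0 gt_eqF.
apply: le_trans (expR_sum_le_avg _ _) _; first by rewrite size_iota subn_gt0.
rewrite size_iota [X in _ * X <= _](eq_bigr (fun k => expR (lam * `|Z k w|))) // => k _.
by congr expR; field.
Qed.

End SpacedPoints.

Section Integrals.
Variables (R : realType) (dT : measure_display) (T : measurableType dT).
Variables (P : probability T R) (Z : nat -> T -> R).
Hypothesis mZ : forall n, measurable_fun setT (Z n).

Lemma measurable_eta j : measurable_fun setT (Defs.eta Z j).
Proof. by apply: measurable_sum => k; exact: mZ. Qed.

Lemma measurable_Delta_shift d (x : 'I_d -> R) : measurable_fun setT (Delta_shift Z x).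
Proof.
apply: measurable_prod => i _; under eq_fun do rewrite big_mkcond /=.
apply: measurable_prod => j _; case: (i < j)%N; last exact: measurable_cst.
by apply: measurable_funB; apply: measurable_funD; (exact: measurable_cst || exact: measurable_eta).
Qed.

Lemma measurable_expR_absZ (c : R) k : measurable_fun setT (fun w => expR (c * `|Z k w|)).
Proof.
apply: measurableT_comp; first exact: measurable_expR.
apply: measurable_funM; first exact: measurable_cst.
exact: measurableT_comp (@normr_measurable R setT) (mZ k).
Qed.

Lemma integral_comp_eq_law (Y Y' : T -> R) (phi : R -> R) :
  measurable_fun setT Y -> measurable_fun setT Y' ->
  (forall A, measurable A -> P (Y @^-1` A) = P (Y' @^-1` A)) ->
  measurable_fun setT phi -> (forall y, 0 <= phi y) ->
  (\int[P]_w (phi (Y w))%:E = \int[P]_w (phi (Y' w))%:E)%E.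
Proof.
move=> mY mY' same_law mphi phi_ge0.
have mphiE : measurable_fun setT (EFin \o phi) by exact/measurable_EFinP.
have := ge0_integral_pushforward mY P measurableT mphiE (fun y _ => phi_ge0 y).
have := ge0_integral_pushforward mY' P measurableT mphiE (fun y _ => phi_ge0 y).
rewrite /= !preimage_setT => <- <-.
by apply: eq_measure_integral => A mA _; exact: same_law.
Qed.

Lemma probability_integral_cst (c : R) : (\int[P]_w c%:E = c%:E)%E.
Proof.
by rewrite integral_cst // [X in (_ * X)%E](_ : _ = 1%E) ?mule1 //; exact: probability_setT.
Qed.

Lemma ge0_integral_sumEFin (I : Type) (r : seq I) (f : I -> T -> R) :
  (forall i, measurable_fun setT (f i)) -> (forall i w, 0 <= f i w) ->
  (\int[P]_w (\sum_(i <- r) f i w)%:E = \sum_(i <- r) \int[P]_w (f i w)%:E)%E.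
Proof.
move=> mf f_ge0; under eq_integral do rewrite -sumEFin.
by rewrite ge0_integral_sum // => [i | i w _]; [exact/measurable_EFinP | rewrite lee_fin].
Qed.

Section SpacedIntegrals.
Variables (d : nat) (x : 'I_d -> R) (s : R).
Hypothesis s_gt0 : 0 < s.
Hypothesis x_spaced : forall i j : 'I_d, val j = (val i).+1 -> s < x j - x i.
Variable K : R.
Hypothesis K_ge1 : 1 <= K.
Hypothesis integral_expR_lam_absZ_le :
  forall k, (\int[P]_w (expR (lam d s * `|Z k w|))%:E <= K%:E)%E.

Lemma Phi_ge0 (i j : 'I_d) w : 0 <= Phi Z s i j w.
Proof.
rewrite /Phi; case: ifP => _ //; apply: mulr_ge0; first by rewrite invr_ge0.
by apply: sumr_ge0 => k _; exact: expR_ge0.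
Qed.

Lemma measurable_Phi (i j : 'I_d) : measurable_fun setT (Phi Z s i j).
Proof.
rewrite /Phi; case: (i < j)%N; last exact: measurable_cst.
apply: measurable_funM; first exact: measurable_cst.
by apply: measurable_sum => k; exact: measurable_expR_absZ.
Qed.

Lemma integral_Phi_le (i j : 'I_d) : (\int[P]_w (Phi Z s i j w)%:E <= K%:E)%E.
Proof.
rewrite /Phi; have [ij|ji] := boolP (i < j)%N; rewrite ?ij ?(negbTE ji); last first.
  by rewrite probability_integral_cst lee_fin.
have mexpR k := measurable_expR_absZ (lam d s) k.
under eq_integral do rewrite EFinM.
rewrite ge0_integralZl_EFin ?invr_ge0 //; last 2 first.
- by move=> w _; rewrite lee_fin; apply: sumr_ge0 => k _; exact: expR_ge0.
- by apply/measurable_EFinP; exact: measurable_sum.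
rewrite ge0_integral_sumEFin //.
apply: (@le_trans _ _ (((j - i)%:R^-1)%:E * \sum_(i <= k < j) K%:E)%E).
  apply: lee_wpmul2l; first by rewrite lee_fin invr_ge0.
  by apply: lee_sum => k _; exact: integral_expR_lam_absZ_le.
rewrite sumEFin sumr_const_seq size_iota -EFinM lee_fin -[K *+ _]mulr_natr.
rewrite mulrCA mulVf ?mulr1 //.
by rewrite pnatr_eq0 -lt0n subn_gt0.
Qed.

Lemma integral_sum_Phi_le :
  (\int[P]_w (\sum_(i < d) \sum_(j < d) Phi Z s i j w)%:E <= ((d * d)%:R * K)%:E)%E.
Proof.
rewrite ge0_integral_sumEFin; last 2 first.
- by move=> i; apply: measurable_sum => j; exact: measurable_Phi.
- by move=> i w; apply: sumr_ge0 => j _; exact: Phi_ge0.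
have integral_row (i : 'I_d) : (\int[P]_w (\sum_(j < d) Phi Z s i j w)%:E
    = \sum_(j < d) \int[P]_w (Phi Z s i j w)%:E)%E.
  by apply: ge0_integral_sumEFin => j; [exact: measurable_Phi | exact: Phi_ge0].
under eq_bigr do rewrite integral_row.
apply: (@le_trans _ _ (\sum_(i < d) \sum_(j < d) K%:E)%E).
  by apply: lee_sum => i _; apply: lee_sum => j _; exact: integral_Phi_le.
by rewrite !sumEFin lee_fin !sumr_const !card_ord mulr_natl mulrnA.
Qed.

Lemma integral_norm_Delta_shift_le :
  (\int[P]_w (`|Delta_shift Z x w|)%:E <= (Delta x * K)%:E)%E.
Proof.
have [d0|d_gt0] := posnP d.
  have empty (F : 'I_d -> R) : \prod_(i < d) F i = 1.
    by rewrite big1 // => i; have := ltn_ord i; rewrite [X in (_ < X)%N]d0.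
  under eq_integral do rewrite /Delta_shift /Delta empty normr1.
  by rewrite /Delta empty mul1r probability_integral_cst lee_fin.
have Delta_gt0 := spaced_Delta_gt0 s_gt0 x_spaced.
pose c := Delta x / (d * d)%:R.
have c_ge0 : 0 <= c by rewrite divr_ge0 // ltW.
have Phi_sum_ge0 w : 0 <= \sum_(i < d) \sum_(j < d) Phi Z s i j w.
  by apply: sumr_ge0 => i _; apply: sumr_ge0 => j _; exact: Phi_ge0.
have mPhi_sum : measurable_fun setT (fun w => \sum_(i < d) \sum_(j < d) Phi Z s i j w).
  by apply: measurable_sum => i; apply: measurable_sum => j; exact: measurable_Phi.
apply: (@le_trans _ _ (\int[P]_w (c%:E * (\sum_(i < d) \sum_(j < d) Phi Z s i j w)%:E))%E).
  apply: ge0_le_integral => //.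
  - apply/measurable_EFinP/measurableT_comp; first exact: normr_measurable.
    exact: measurable_Delta_shift.
  - by apply: emeasurable_funM => //; apply/measurable_EFinP.
  - move=> w _; rewrite -EFinM lee_fin.
    apply: le_trans (norm_Delta_shift_le Z s_gt0 x_spaced w) _.
    by rewrite /c -mulrA ler_wpM2l ?(ltW Delta_gt0) // expR_sum_rho_le.
rewrite ge0_integralZl_EFin //; last 2 first.
- by move=> w _; rewrite lee_fin.
- exact/measurable_EFinP.
apply: le_trans (lee_wpmul2l _ integral_sum_Phi_le) _; first by rewrite lee_fin.
by rewrite -EFinM lee_fin /c mulrA divfK // pnatr_eq0 -lt0n muln_gt0 d_gt0.
Qed.

Lemma h_ge0 : (forall k, \forall w \ae P, 0 <= Z k w) -> (0 <= h P Z x)%E.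
Proof.
move=> Z_ge0; have Z_ge0_all : \forall w \ae P, forall k : 'I_d, 0 <= Z k w.
  exact: filter_forall.
rewrite hE integralE.
have -> : (\int[P]_w ((fun w => (Delta_shift Z x w)%:E)^\- w) = 0)%E.
  apply/eqP; rewrite eq_le integral_ge0 ?andbT => [|w _]; last exact: funeneg_ge0.
  apply: le_trans (_ : \int[P]_w (cst 0%E w) <= 0)%E; last by rewrite integral0.
  apply: ae_ge0_le_integral => //.
  - apply: measurable_funeneg; apply/measurable_EFinP; exact: measurable_Delta_shift.
  - apply: filterS Z_ge0_all => w w_ge0 _.
    rewrite funenegE ge_max lexx andbT leeNl oppe0 lee_fin.
    by apply: Delta_shift_ge0 s_gt0 x_spaced _ _ => k kd; exact: (w_ge0 (Ordinal kd)).
by rewrite sube0; apply: integral_ge0 => w _; exact: funepos_ge0.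
Qed.

Lemma h_le_Delta_mul : (h P Z x <= (Delta x * K)%:E)%E.
Proof.
apply: le_trans integral_norm_Delta_shift_le.
rewrite hE; apply: le_trans (lee_abs _) _.
under [X in (_ <= X)%E]eq_integral do rewrite -abse_EFin.
by apply: le_abse_integral => //; apply/measurable_EFinP; exact: measurable_Delta_shift.
Qed.

End SpacedIntegrals.
End Integrals.

Section ExponentialMoment.
Variables (R : realType) (dT : measure_display) (T : measurableType dT).
Variables (P : probability T R) (zeta : T -> R) (Z : nat -> T -> R).
Hypothesis mzeta : measurable_fun setT zeta.
Hypothesis mZ : forall n, measurable_fun setT (Z n).
Hypothesis zeta_ge1 : forall w, 1 <= zeta w.
Hypothesis Z_copies : forall n (A : set R), measurable A ->
  P (Z n @^-1` A) = P (zeta @^-1` A).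

Lemma Z_ge0_ae k : \forall w \ae P, 0 <= Z k w.
Proof.
exists (Z k @^-1` `]-oo, 0[); split => [||w /= /negP].
- by rewrite -[X in measurable X]setTI; exact: mZ.
- rewrite Z_copies // (_ : zeta @^-1` _ = set0) ?measure0 //.
  by apply/seteqP; split => w //=; rewrite in_itv /= ltNge (le_trans ler01).
- by rewrite in_itv /= ltNge.
Qed.

Lemma integral_expR_absZ_le (u lam : R) k : 0 < u -> 0 <= lam -> lam <= u / 2 ->
  (\int[P]_w (expR (u * zeta w))%:E < +oo)%E ->
  (\int[P]_w (expR (lam * `|Z k w|))%:E <=
     (1 + 2 * lam / u * fine (\int[P]_w (expR (u * zeta w))%:E))%:E)%E.
Proof.
move=> u_gt0 lam_ge0 lam_le moment_fin.
have mexpR_zeta : measurable_fun setT (fun w => expR (u * zeta w)).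
  apply: measurableT_comp; first exact: measurable_expR.
  by apply: measurable_funM; [exact: measurable_cst | exact: mzeta].
have c_ge0 : 0 <= 2 * lam / u by rewrite !mulr_ge0 ?invr_ge0 // ltW.
set M := (\int[P]_w (expR (u * zeta w))%:E)%E.
have M_fin : M \is a fin_num.
  by rewrite ge0_fin_numE //; apply: integral_ge0 => w _; rewrite lee_fin expR_ge0.
rewrite (integral_comp_eq_law (phi := fun y => expR (lam * `|y|)) (mZ k) mzeta (Z_copies k)) //;
  last first.
  apply: (measurableT_comp (@measurable_expR R)).
  by apply: measurable_funM; [exact: measurable_cst | exact: normr_measurable].
apply: (@le_trans _ _ (\int[P]_w (1 + 2 * lam / u * expR (u * zeta w))%:E)%E).
  apply: ge0_le_integral => //.
  - apply/measurable_EFinP/measurableT_comp; first exact: measurable_expR.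
    apply: measurable_funM; first exact: measurable_cst.
    exact: measurableT_comp (@normr_measurable R setT) mzeta.
  - apply/measurable_EFinP; apply: measurable_funD; first exact: measurable_cst.
    by apply: measurable_funM; first exact: measurable_cst.
  - move=> w _; rewrite lee_fin ger0_norm; last exact: le_trans (zeta_ge1 w).
    by apply: expR_mul_le_1D => //; exact: le_trans (zeta_ge1 w).
under eq_integral do rewrite EFinD EFinM.
rewrite ge0_integralD //; last 2 first.
- by move=> w _; rewrite lee_fin mulr_ge0 ?expR_ge0.
- by apply: emeasurable_funM => //; exact/measurable_EFinP.
rewrite probability_integral_cst ge0_integralZl_EFin //; last exact/measurable_EFinP.
by rewrite -/M -(fineK M_fin) -EFinM -EFinD.
Qed.

Lemma h_le_Delta_mul_moment d (x : 'I_d -> R) (s u : R) : 0 < s ->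
  (forall i j : 'I_d, val j = (val i).+1 -> s < x j - x i) ->
  0 < u -> lam d s <= u / 2 -> (\int[P]_w (expR (u * zeta w))%:E < +oo)%E ->
  (h P Z x <= (Delta x * (1 + 2 * lam d s / u
                 * fine (\int[P]_w (expR (u * zeta w))%:E)))%:E)%E.
Proof.
move=> s_gt0 x_spaced u_gt0 lam_le moment_fin.
have lam_ge0 : 0 <= lam d s by rewrite divr_ge0 // ltW.
apply: (h_le_Delta_mul (P := P) mZ s_gt0 x_spaced) => [|k]; last first.
  exact: integral_expR_absZ_le.
have M_ge0 : 0 <= fine (\int[P]_w (expR (u * zeta w))%:E).
  by apply: fine_ge0; apply: integral_ge0 => w _; rewrite lee_fin expR_ge0.
by rewrite lerDl; apply: mulr_ge0 => //; apply: divr_ge0; [exact: mulr_ge0 | exact: ltW].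
Qed.

End ExponentialMoment.

Section Thresholds.
Variable R : realType.

Lemma sqr_nat_div_powR_le (t a e g : R) (d : nat) : 1 <= t -> d%:R <= t `^ a ->
  2 * a + g <= e -> (d * d)%:R / t `^ e * t `^ g <= 1.
Proof.
move=> t_ge1 d_le age; have t_gt0 : 0 < t := lt_le_trans ltr01 t_ge1.
have te_gt0 : 0 < t `^ e by exact: powR_gt0.
rewrite mulrAC ler_pdivrMr // mul1r; apply: le_trans (ler_powR t_ge1 age).
rewrite (_ : 2 * a + g = a + a + g); last by ring.
rewrite !powRD ?(gt_eqF t_gt0) ?implybT // natrM.
by rewrite ler_wpM2r ?powR_ge0 // ler_pM.
Qed.

Lemma le_powR_of_root_lt (b g t : R) : 0 <= b -> 0 < g -> b `^ g^-1 < t -> b <= t `^ g.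
Proof.
move=> b_ge0 g_gt0 bt.
rewrite -[leLHS](powRr1 b_ge0) -(mulVf (lt0r_neq0 g_gt0)) powRrM.
apply: ge0_ler_powR; rewrite ?nnegrE ?powR_ge0 ?ltW //.
exact: le_lt_trans (powR_ge0 _ _) bt.
Qed.

Lemma sqr_nat_div_powR_le_half (u t a e g : R) (d : nat) : 0 < u -> 1 <= t ->
  d%:R <= t `^ a -> 2 * a + g <= e -> 0 < g -> (2 / u) `^ g^-1 < t ->
  (d * d)%:R / t `^ e <= u / 2.
Proof.
move=> u_gt0 t_ge1 d_le age g_gt0 t_gt.
have tg_ge : 2 / u <= t `^ g by apply: le_powR_of_root_lt; rewrite ?divr_ge0 ?ltW.
have : (d * d)%:R / t `^ e * (2 / u) <= 1.
  apply: le_trans (sqr_nat_div_powR_le t_ge1 d_le age).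
  by apply: ler_wpM2l => //; rewrite divr_ge0 ?powR_ge0.
by rewrite -ler_pdivlMr ?divr_gt0 // div1r invf_div.
Qed.

Lemma one_subr_mul_le (D p q : R) (H : \bar R) : 0 < D -> 0 <= p -> p <= q ->
  (0 <= H)%E -> (H <= (D * (1 + p))%:E)%E -> ((1 - q)%:E * H <= D%:E)%E.
Proof.
move=> D_gt0 p_ge0 pq H_ge0 H_le.
have [q_ge1|q_lt1] := leP 1 q.
  apply: (@le_trans _ _ 0%E); last by rewrite lee_fin ltW.
  by apply: mule_le0_ge0 => //; rewrite lee_fin subr_le0.
apply: le_trans (lee_wpmul2l _ H_le) _; first by rewrite lee_fin subr_ge0 ltW.
rewrite -EFinM lee_fin mulrCA -[leRHS]mulr1 ler_wpM2l ?(ltW D_gt0) //.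
have pq_ge0 : 0 <= p * q by rewrite mulr_ge0 // (le_trans p_ge0).
lra.
Qed.

End Thresholds.

Theorem lemma4p1 (R : realType) (dT : measure_display) (T : measurableType dT)
  (P : probability T R) (X zeta : T -> R) (Z : nat -> T -> R)
  (mX : measurable_fun setT X) (mzeta : measurable_fun setT zeta)
  (mZ : forall n, measurable_fun setT (Z n))
  (zeta_ge1 : forall w, 1 <= zeta w)
  (Z_copies : forall n (A : set R), measurable A ->
     P (Z n @^-1` A) = P (zeta @^-1` A))
  (Z_indep : mutually_independent P Z)
  (condX : condition_ii' P X zeta)
  (expmom : exists u : R, 0 < u /\
     (\int[P]_w (expR (u * zeta w))%:E < +oo)%E)
  (a eps : R) (ha : 0 < a) (heps : 0 < eps) (hae : 2 * a < 1/2 - eps) :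
  exists t0 c : R, 0 < t0 /\ 0 < c /\
    forall t : R, t0 < t ->
    forall d : nat, d%:R <= t `^ a ->
    forall gamma : R, 0 < gamma -> gamma < 1/2 - 2 * a - eps ->
    forall x : 'I_d -> R, @Wte R d t eps x ->
      ((1 - c / t `^ gamma)%:E * h P Z x <= (Delta x)%:E)%E.
Proof.
have [u [u_gt0 moment_fin]] := expmom.
set M := fine (\int[P]_w (expR (u * zeta w))%:E).
have M_ge0 : 0 <= M by apply: fine_ge0; apply: integral_ge0 => w _; rewrite lee_fin expR_ge0.
have C_ge0 : 0 <= 2 * M / u by rewrite !mulr_ge0 ?invr_ge0 // ltW.
set G := 1/2 - 2 * a - eps; have G_gt0 : 0 < G by rewrite /G; lra.
exists (Num.max 1 ((2 / u) `^ G^-1)), (2 * M / u + 1); split; first by rewrite lt_max ltr01.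
split=> [|t]; first lra.
rewrite gt_max => /andP[t_gt1 t_gt] d d_le gamma gamma_gt0 gamma_lt x x_spaced.
set s := t `^ (1/2 - eps); have s_gt0 : 0 < s by rewrite powR_gt0 // (lt_trans ltr01).
have lam_tg : lam d s * t `^ gamma <= 1.
  by apply: sqr_nat_div_powR_le (ltW t_gt1) d_le _; move: gamma_lt; rewrite /G; lra.
have lam_ge0 : 0 <= lam d s by rewrite divr_ge0 // ltW.
have lam_le : lam d s <= u / 2.
  by apply: sqr_nat_div_powR_le_half (ltW t_gt1) d_le _ G_gt0 t_gt; rewrite /G; lra.
apply: one_subr_mul_le (spaced_Delta_gt0 s_gt0 x_spaced) _ _ _
  (h_le_Delta_mul_moment mzeta mZ zeta_ge1 Z_copies s_gt0 x_spaced u_gt0 lam_le moment_fin).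
- by apply: mulr_ge0 => //; apply: divr_ge0; [exact: mulr_ge0 | exact: ltW].
- have tg_gt0 : 0 < t `^ gamma by rewrite powR_gt0 // (lt_trans ltr01).
  rewrite -/M (_ : 2 * lam d s / u * M = 2 * M / u * lam d s); last by field; lra.
  rewrite ler_pdivlMr //; nra.
- exact: (h_ge0 (P := P) mZ s_gt0 x_spaced (Z_ge0_ae mZ zeta_ge1 Z_copies)).
Qed.
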